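(* Let $X$ be a real inner product space with $\dim X\ge 2$ and inner product $\langle\cdot,\cdot\rangle$. Then there is no function $f\colon X\to\mathbb{R}$ satisfying $f(x+y)=f(x)f(y)-\langle x,y\rangle$ for all $x,y\in X$. *)

From HB Require Import structures.
From mathcomp Require Import all_boot all_order all_algebra.
From mathcomp Require Import reals.
Set Implicit Arguments. Unset Strict Implicit. Unset Printing Implicit Defensive.
Import Order.TTheory GRing.Theory Num.Theory.
Local Open Scope ring_scope.

Definition is_inner_product (R : realType) (V : lmodType R) (ip : V -> V -> R) : Prop :=
  [/\ (forall x y : V, ip x y = ip y x),
      (forall (a : R) (x y z : V), ip (a *: x + y) z = a * ip x z + ip y z)
    & (forall x : V, x != 0 -> 0 < ip x x)].

Definition dim_ge2 (R : realType) (V : lmodType R) : Prop :=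
  exists x y : V, forall a b : R, a *: x + b *: y = 0 -> a = 0 /\ b = 0.

(* Comparing the two ways of expanding f (x + y + z) gives
   <x, y> (f z - 1) = <y, z> (f x - 1).  Taking x = y = w orthogonal to a
   nonzero u forces f u = 1; then x = y = u forces f = 1 everywhere, which
   contradicts f (u + u) = f u ^ 2 - <u, u>. *)
From HB Require Import structures.
From mathcomp Require Import all_boot all_order all_algebra.
From mathcomp Require Import reals.
From mathcomp Require Import lra.
Import Order.TTheory GRing.Theory Num.Theory.
Local Open Scope ring_scope.

Section InnerProduct.

Context {R : realType} {V : lmodType R} {ip : V -> V -> R}.
Hypothesis hip : is_inner_product ip.

Lemma ip_sym x y : ip x y = ip y x.
Proof. by case: hip. Qed.

Lemma ipDl x y z : ip (x + y) z = ip x z + ip y z.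
Proof. by case: hip => _ hl _; rewrite -[x in x + y]scale1r hl mul1r. Qed.

Lemma ip0l z : ip 0 z = 0.
Proof. by have := ipDl 0 0 z; rewrite addr0 => h; lra. Qed.

Lemma ipZl a x z : ip (a *: x) z = a * ip x z.
Proof. by case: hip => _ hl _; rewrite -[a *: x]addr0 hl ip0l addr0. Qed.

Lemma ip_gt0 {x} : x != 0 -> 0 < ip x x.
Proof. by case: hip => _ _ /(_ x). Qed.

Lemma dim_ge2_orthogonal_pair :
  dim_ge2 V -> exists u w : V, [/\ u != 0, w != 0 & ip w u = 0].
Proof.
case=> u [v indep].
have u_neq0 : u != 0.
  apply/negP => /eqP u0; have := indep 1 0.
  by rewrite u0 scaler0 scale0r addr0; case=> // /eqP; rewrite oner_eq0.
(* One Gram-Schmidt step: w := v - (<u, v> / <u, u>) u. *)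
exists u, ((- (ip u v / ip u u)) *: u + 1 *: v); split=> //.
  by apply/negP => /eqP /indep [_] /eqP; rewrite oner_eq0.
have uu_neq0 : ip u u != 0 by rewrite gt_eqF ?ip_gt0.
rewrite ipDl !ipZl mul1r (ip_sym v u) mulNr -mulrA mulVf // mulr1.
by rewrite addNr.
Qed.

Section FunctionalEquation.

Context {f : V -> R}.
Hypothesis f_eq : forall x y, f (x + y) = f x * f y - ip x y.

Lemma f_cocycle x y z : ip x y * (f z - 1) = ip y z * (f x - 1).
Proof.
have := congr1 f (addrA x y z); rewrite !f_eq !ipDl.
by rewrite (ip_sym x (y + z)) ipDl (ip_sym y x) (ip_sym z x) => h; lra.
Qed.

Lemma f_eq1_of_orthogonal {u w} : w != 0 -> ip w u = 0 -> f u = 1.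
Proof.
move=> w_neq0 wu; have := f_cocycle w w u.
rewrite wu mul0r => /eqP; rewrite mulf_eq0 gt_eqF ?ip_gt0 //=.
by rewrite subr_eq0 => /eqP.
Qed.

Lemma f_eq1_everywhere {u} : u != 0 -> f u = 1 -> forall z, f z = 1.
Proof.
move=> u_neq0 fu z; have := f_cocycle u u z.
rewrite fu subrr mulr0 => /eqP; rewrite mulf_eq0 gt_eqF ?ip_gt0 //=.
by rewrite subr_eq0 => /eqP.
Qed.

End FunctionalEquation.

End InnerProduct.

Theorem mainTheorem8 (R : realType) (V : lmodType R) (ip : V -> V -> R)
  (hip : is_inner_product ip) (hdim : dim_ge2 V) :
  ~ (exists f : V -> R, forall x y : V, f (x + y) = f x * f y - ip x y).
Proof.
case=> f f_eq.
have [u [w [u_neq0 w_neq0 wu]]] := dim_ge2_orthogonal_pair hip hdim.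
have fu := f_eq1_of_orthogonal hip f_eq w_neq0 wu.
have f1 := f_eq1_everywhere hip f_eq u_neq0 fu.
have uu_gt0 := ip_gt0 hip u_neq0.
by have := f_eq u u; rewrite !f1 => h; lra.
Qed.
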